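(* Let $d\in\{2,3\}$, $r>\frac{d+1}{2}$, $\beta>0$, and $\mathbf u,\mathbf v,\mathbf w\in H_{\mathbb C}$ with $\|A^{1/4}\mathbf u\|_\beta,\|A^{1/4}\mathbf v\|_\beta,\|A^{1/4}\mathbf w\|_\beta<\infty$. Then $$|\langle B(\mathbf u,\mathbf v),A^{r}e^{2\beta A^{1/2}}\mathbf w\rangle|\le C\,2^rC_W(r)\Big(\|\mathbf v\|_\beta\|A^{1/4}\mathbf u\|_\beta\|A^{1/4}\mathbf w\|_\beta+\|\mathbf u\|_\beta\|A^{1/4}\mathbf v\|_\beta\|A^{1/4}\mathbf w\|_\beta\Big),$$ with $C>0$ depending only on $d$.
   Context: Periodic domain $\Omega=[0,2\pi]^d$, $H$ = real mean-zero divergence-free $L^2$ vector fields, $H_{\mathbb C}=H+iH$ with sesquilinear $L^2$ inner product. $A=-\Delta$ acts by multiplication by $|\mathbf k|^2$ on Fourier coefficients. $\|\mathbf f\|_\beta=\|A^{r/2}e^{\beta A^{1/2}}\mathbf f\|$. $B(\mathbf u,\mathbf v)=\mathbb P(\mathbf u\cdot\nabla\mathbf v)$, $\mathbb P$ the Leray–Helmholtz projection, extended complex-bilinearly. $C_W(r)=\frac{1}{\pi 2^{d-1}}\frac{2r-d}{2r-1-d}$. *)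

From Stdlib Require Import Reals Lra List ZArith ClassicalEpsilon.
Open Scope R_scope.

Definition C := (R * R)%type.
Definition C0 : C := (0, 0).
Definition RtoC (x : R) : C := (x, 0).
Definition Ci : C := (0, 1).
Definition Cadd (a b : C) : C := (fst a + fst b, snd a + snd b).
Definition Cmul (a b : C) : C :=
  (fst a * fst b - snd a * snd b, fst a * snd b + snd a * fst b).
Definition Cconj (a : C) : C := (fst a, - snd a).
Definition Cnorm2 (a : C) : R := fst a ^ 2 + snd a ^ 2.
Definition Cmod (a : C) : R := sqrt (Cnorm2 a).

Definition Rsum_range (d : nat) (f : nat -> R) : R :=
  fold_right (fun i acc => f i + acc) 0 (seq 0 d).
Definition Csum_range (d : nat) (f : nat -> C) : C :=
  fold_right (fun i acc => Cadd (f i) acc) C0 (seq 0 d).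

Definition lsum {T : Type} (f : T -> R) (l : list T) : R :=
  fold_right (fun x acc => f x + acc) 0 l.
Definition has_sum {T : Type} (f : T -> R) (S : R) : Prop :=
  forall eps, 0 < eps -> exists F0 : list T,
    forall F : list T, NoDup F -> incl F0 F -> Rabs (lsum f F - S) < eps.
(** The sum of a summable family (0 by convention if not summable). *)
Definition tsum {T : Type} (f : T -> R) : R :=
  match excluded_middle_informative (exists S, has_sum f S) with
  | left H => proj1_sig (constructive_indefinite_description _ H)
  | right _ => 0
  end.
Definition tsumC {T : Type} (f : T -> C) : C :=
  (tsum (fun x => fst (f x)), tsum (fun x => snd (f x))).

Definition Zd (d : nat) := {k : nat -> Z | forall i, (d <= i)%nat -> k i = 0%Z}.
Lemma Zd_sub_proof (d : nat) (k j : Zd d) :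
  forall i, (d <= i)%nat -> (proj1_sig k i - proj1_sig j i)%Z = 0%Z.
Proof. intros i Hi. rewrite (proj2_sig k i Hi), (proj2_sig j i Hi). reflexivity. Qed.
Definition Zd_sub (d : nat) (k j : Zd d) : Zd d :=
  exist _ (fun i => (proj1_sig k i - proj1_sig j i)%Z) (Zd_sub_proof d k j).
Definition Zd_zero (d : nat) : Zd d := exist _ (fun _ => 0%Z) (fun _ _ => eq_refl).
Definition kcomp {d : nat} (k : Zd d) (i : nat) : R := IZR (proj1_sig k i).
Definition knorm2 (d : nat) (k : Zd d) : R := Rsum_range d (fun i => kcomp k i ^ 2).
Definition knorm (d : nat) (k : Zd d) : R := sqrt (knorm2 d k).
(** Apow d k s = |k|^(2 s), the symbol of A^s (set to 0 at k = 0). *)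
Definition Apow (d : nat) (k : Zd d) (s : R) : R :=
  if Req_EM_T (knorm2 d k) 0 then 0 else Rpower (knorm2 d k) s.

(** A complex vector field on [0,2pi]^d, given by its Fourier coefficients
    u = sum_k u k e^{i k.x}; only components 0..d-1 are meaningful. *)
Definition field (d : nat) := Zd d -> nat -> C.

Definition vnorm2 (d : nat) (u : field d) (k : Zd d) : R :=
  Rsum_range d (fun i => Cnorm2 (u k i)).

(** Membership in H_C: square integrable, mean zero, divergence free. *)
Definition in_HC (d : nat) (u : field d) : Prop :=
  (exists S, has_sum (vnorm2 d u) S) /\
  (forall i, (i < d)%nat -> u (Zd_zero d) i = C0) /\
  (forall k, Csum_range d (fun i => Cmul (RtoC (kcomp k i)) (u k i)) = C0).

(** L^2 inner product on [0,2pi]^d (sesquilinear), via Parseval. *)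
Definition inner (d : nat) (f g : field d) : C :=
  Cmul (RtoC ((2 * PI) ^ d))
    (tsumC (fun k => Csum_range d (fun i => Cmul (f k i) (Cconj (g k i))))).

(** Squared summand of || A^a u ||_beta = || A^{r/2 + a} e^{beta A^{1/2}} u ||. *)
Definition gev_term (d : nat) (r beta a : R) (u : field d) (k : Zd d) : R :=
  Apow d k (r + 2 * a) * exp (2 * beta * knorm d k) * vnorm2 d u k.
Definition gev_finite (d : nat) (r beta a : R) (u : field d) : Prop :=
  exists S, has_sum (gev_term d r beta a u) S.
Definition gev_norm (d : nat) (r beta a : R) (u : field d) : R :=
  sqrt ((2 * PI) ^ d * tsum (gev_term d r beta a u)).

(** Leray–Helmholtz projection on the k-th Fourier mode. *)
Definition leray (d : nat) (k : Zd d) (a : nat -> C) : nat -> C :=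
  fun i => if Req_EM_T (knorm2 d k) 0 then C0 else
    Cadd (a i) (Cmul (RtoC (- kcomp k i / knorm2 d k))
                     (Csum_range d (fun m => Cmul (RtoC (kcomp k m)) (a m)))).

(** B(u,v) = P (u . grad v), complex bilinear, on the Fourier side. *)
Definition Bhat (d : nat) (u v : field d) : field d :=
  fun k => leray d k (fun i =>
    tsumC (fun j : Zd d =>
      Cmul Ci (Cmul (Csum_range d (fun m => Cmul (u j m) (RtoC (kcomp (Zd_sub d k j) m))))
                    (v (Zd_sub d k j) i)))).

Definition gev_mult (d : nat) (r beta : R) (w : field d) : field d :=
  fun k i => Cmul (RtoC (Apow d k r * exp (2 * beta * knorm d k))) (w k i).

Definition C_W (d : nat) (r : R) : R :=
  / (PI * 2 ^ (d - 1)) * ((2 * r - INR d) / (2 * r - 1 - INR d)).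

From Pilot Require Import Defs.
From Stdlib Require Import Reals Lra Lia List ZArith Classical ClassicalEpsilon FunctionalExtensionality.
Open Scope R_scope.

(* After the Leray projection and the finitely
   many component sums are bounded, the pairing is controlled by
     sum_k |k|^(2r) e^(2 beta |k|) |w_k| sum_j |u_j| |k - j| |v_(k-j)|.
   Since |k| <= |j| + |k - j|, the weight |k|^(2r) |k - j| e^(2 beta |k|) is at most
     2^r |k|^(r+1/2) e^(beta |k|) (e^(beta |j|) |k-j|^(r+1/2) e^(beta |k-j|)
                                  + |j|^(r+1/2) e^(beta |j|) e^(beta |k-j|)),
   and each of the two resulting sums is a discrete Young inequality l^2 . (l^1 * l^2).
   The l^1 factor e^(beta |j|) |u_j| = |j|^(-r) . |j|^r e^(beta |j|) |u_j| is handled by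
   Cauchy-Schwarz against the convergent lattice sum of |j|^(-2r).  The factor C_W(r)
   of the statement is at least 1/(4 pi), so it is absorbed into the constant. *)

(** * Finite and unconditional sums *)

Section FiniteSums.
Context {T : Type}.
Implicit Types (f g : T -> R) (l : list T).

Lemma lsum_cons f a l : lsum f (a :: l) = f a + lsum f l.
Proof. reflexivity. Qed.

Lemma lsum_app f l1 l2 : lsum f (l1 ++ l2) = lsum f l1 + lsum f l2.
Proof. induction l1 as [|a l1 IH]; cbn [app]; [unfold lsum; simpl; lra|]. rewrite !lsum_cons, IH. lra. Qed.

Lemma lsum_nonneg f l : (forall x, 0 <= f x) -> 0 <= lsum f l.
Proof. intros H; induction l as [|a l IH]; [unfold lsum; simpl; lra|]. rewrite lsum_cons. specialize (H a). lra. Qed.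

Lemma lsum_le f g l : (forall x, In x l -> f x <= g x) -> lsum f l <= lsum g l.
Proof.
  induction l as [|a l IH]; intros H; [unfold lsum; simpl; lra|]. rewrite !lsum_cons.
  assert (f a <= g a) by (apply H; left; auto).
  assert (lsum f l <= lsum g l) by (apply IH; intros; apply H; right; auto). lra.
Qed.

Lemma lsum_ext f g l : (forall x, In x l -> f x = g x) -> lsum f l = lsum g l.
Proof. intros H; apply Rle_antisym; apply lsum_le; intros; rewrite H; auto; lra. Qed.

Lemma lsum_scal f c l : lsum (fun x => c * f x) l = c * lsum f l.
Proof. induction l as [|a l IH]; [unfold lsum; simpl; lra|]. rewrite !lsum_cons, IH. lra. Qed.

Lemma lsum_plus f g l : lsum (fun x => f x + g x) l = lsum f l + lsum g l.
Proof. induction l as [|a l IH]; [unfold lsum; simpl; lra|]. rewrite !lsum_cons, IH. lra. Qed.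

Lemma lsum_const (c : R) l : lsum (fun _ => c) l = INR (length l) * c.
Proof. induction l as [|a l IH]; [unfold lsum; simpl; lra|]. rewrite lsum_cons, IH. cbn [length]. rewrite S_INR. lra. Qed.

Lemma lsum_abs f l : Rabs (lsum f l) <= lsum (fun x => Rabs (f x)) l.
Proof.
  induction l as [|a l IH]. unfold lsum; simpl; rewrite Rabs_R0; lra.
  rewrite !lsum_cons. eapply Rle_trans; [apply Rabs_triang|]. lra.
Qed.

Lemma lsum_term f l x : (forall y, 0 <= f y) -> In x l -> f x <= lsum f l.
Proof.
  intros Hf Hx. induction l as [|a l IH]; [contradiction|]. rewrite lsum_cons.
  destruct Hx as [<-|Hx].
  - pose proof (lsum_nonneg f l Hf); lra.
  - specialize (IH Hx). specialize (Hf a). lra.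
Qed.

Lemma lsum_incl f l l' : (forall x, 0 <= f x) ->
  NoDup l -> incl l l' -> lsum f l <= lsum f l'.
Proof.
  intros Hf Hl; revert l'; induction Hl as [|a l Hna Hl IH]; intros l' Hi.
  - apply lsum_nonneg; auto.
  - assert (Ha : In a l') by (apply Hi; left; auto).
    destruct (in_split _ _ Ha) as [l1 [l2 ->]].
    assert (lsum f l <= lsum f (l1 ++ l2)).
    { apply IH. intros x Hx. assert (Hx' : In x (l1 ++ a :: l2)) by (apply Hi; right; auto).
      apply in_app_or in Hx'. apply in_or_app. destruct Hx' as [H|[H|H]]; auto.
      subst; contradiction. }
    rewrite lsum_app in *. rewrite lsum_cons in *. rewrite lsum_cons. lra.
Qed.

Lemma lsum_eq0 f l : (forall x, 0 <= f x) -> lsum f l = 0 -> forall x, In x l -> f x = 0.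
Proof.
  intros Hf H x Hx. pose proof (lsum_term f l x Hf Hx). specialize (Hf x). lra.
Qed.

Lemma lsum_zero_or_ge1 f l : (forall x, f x = 0 \/ 1 <= f x) -> lsum f l = 0 \/ 1 <= lsum f l.
Proof.
  intros Hf. induction l as [|a l IH]; [left; reflexivity|]. rewrite lsum_cons.
  destruct (Hf a), IH; lra.
Qed.

End FiniteSums.

Lemma lsum_map {A B} (f : B -> R) (h : A -> B) l : lsum f (map h l) = lsum (fun x => f (h x)) l.
Proof. induction l as [|a l IH]; [reflexivity|]. cbn [map]. rewrite !lsum_cons, IH. reflexivity. Qed.

Lemma lsum_swap {A B} (f : A -> B -> R) l1 l2 :
  lsum (fun x => lsum (fun y => f x y) l2) l1 = lsum (fun y => lsum (fun x => f x y) l1) l2.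
Proof.
  induction l1 as [|a l1 IH].
  - induction l2 as [|b l2 IH2]; [reflexivity|]. rewrite lsum_cons, <- IH2. unfold lsum; simpl; lra.
  - rewrite lsum_cons, IH, <- lsum_plus. reflexivity.
Qed.

Lemma Rsum_range_lsum d f : Rsum_range d f = lsum f (seq 0 d).
Proof. reflexivity. Qed.

Lemma NoDup_map_inj {A B} (f : A -> B) l :
  (forall x y, f x = f y -> x = y) -> NoDup l -> NoDup (map f l).
Proof.
  intros Hi H; induction H; simpl; constructor; auto.
  intros Hin. apply in_map_iff in Hin. destruct Hin as [y [E Hy]]. apply Hi in E. subst; auto.
Qed.

Lemma NoDup_cover {T} (l : list T) : exists l', NoDup l' /\ incl l l'.
Proof.
  exists (nodup (fun x y => excluded_middle_informative (x = y)) l).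
  split; [apply NoDup_nodup|]. intros x Hx. apply nodup_In; auto.
Qed.

Definition partial_sums_le {T} (f : T -> R) (M : R) : Prop :=
  forall F, NoDup F -> lsum f F <= M.

Lemma partial_sums_le_nonneg {T} (f : T -> R) M : partial_sums_le f M -> 0 <= M.
Proof. intros H. exact (H nil (NoDup_nil _)). Qed.

Section UnconditionalSums.
Context {T : Type}.
Implicit Types (f : T -> R).

Lemma tsum_spec f : (exists S, has_sum f S) -> has_sum f (tsum f).
Proof.
  intros H. unfold tsum. destruct (excluded_middle_informative _); [|contradiction].
  destruct (constructive_indefinite_description _ e); simpl; auto.
Qed.

Lemma tsum_not_summable f : ~ (exists S, has_sum f S) -> tsum f = 0.
Proof. intros H. unfold tsum. destruct (excluded_middle_informative _); [contradiction|auto]. Qed.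

(* Also true for non-summable [f], where [tsum f = 0]. *)
Lemma Rabs_tsum_approx f eps : 0 < eps -> exists J0 : list T,
  forall J, NoDup J -> incl J0 J -> Rabs (tsum f) <= lsum (fun x => Rabs (f x)) J + eps.
Proof.
  intros He. destruct (classic (exists S, has_sum f S)) as [Hs|Hs].
  - destruct (tsum_spec f Hs eps He) as [F0 HF0]. exists F0. intros J HJ Hi.
    specialize (HF0 J HJ Hi). pose proof (lsum_abs f J).
    rewrite Rabs_minus_sym in HF0. pose proof (Rabs_triang_inv (tsum f) (lsum f J)). lra.
  - exists nil. intros J _ _. rewrite tsum_not_summable, Rabs_R0 by auto.
    pose proof (lsum_nonneg (fun x => Rabs (f x)) J (fun x => Rabs_pos _)). lra.
Qed.

Lemma Rabs_tsum_le f M : partial_sums_le (fun x => Rabs (f x)) M -> Rabs (tsum f) <= M.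
Proof.
  intros H. apply Rnot_lt_le; intros Hlt.
  destruct (Rabs_tsum_approx f ((Rabs (tsum f) - M) / 2)) as [J0 HJ]; [lra|].
  destruct (NoDup_cover J0) as [J [HJn Hi]].
  specialize (HJ J HJn Hi). specialize (H J HJn). lra.
Qed.

Lemma lsum_le_tsum f F : (forall x, 0 <= f x) -> (exists S, has_sum f S) ->
  NoDup F -> lsum f F <= tsum f.
Proof.
  intros Hf Hs HF. apply Rnot_lt_le; intros Hlt.
  destruct (tsum_spec f Hs (lsum f F - tsum f)) as [F0 H0]; [lra|].
  destruct (NoDup_cover (F ++ F0)) as [G [HG Hi]].
  assert (lsum f F <= lsum f G) by (apply lsum_incl; auto; intros x Hx; apply Hi, in_or_app; auto).
  specialize (H0 G HG (fun x Hx => Hi x (in_or_app _ _ _ (or_intror Hx)))).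
  apply Rabs_def2 in H0. lra.
Qed.

Lemma tsum_nonneg f : (forall x, 0 <= f x) -> 0 <= tsum f.
Proof.
  intros H. destruct (classic (exists S, has_sum f S)) as [Hs|Hs].
  - exact (lsum_le_tsum f nil H Hs (NoDup_nil _)).
  - rewrite tsum_not_summable by auto. lra.
Qed.

Lemma partial_sums_le_tsum f : (forall x, 0 <= f x) -> (exists S, has_sum f S) ->
  partial_sums_le f (tsum f).
Proof. intros Hf Hs F HF. apply lsum_le_tsum; auto. Qed.

Lemma summable_of_partial_sums_le f M : (forall x, 0 <= f x) ->
  partial_sums_le f M -> exists S, has_sum f S.
Proof.
  intros Hf HM.
  set (E := fun x => exists F, NoDup F /\ x = lsum f F).
  assert (Hb : bound E) by (exists M; intros x [F [HF ->]]; auto).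
  assert (He : exists x, E x) by (exists 0; exists nil; split; [constructor|reflexivity]).
  destruct (completeness E Hb He) as [S [HS1 HS2]].
  exists S. intros eps Heps.
  destruct (classic (exists F0, NoDup F0 /\ S - eps < lsum f F0)) as [[F0 [HF0 Hl]]|Hn].
  - exists F0. intros F HF Hi.
    assert (lsum f F0 <= lsum f F) by (apply lsum_incl; auto).
    assert (lsum f F <= S) by (apply HS1; exists F; auto).
    apply Rabs_def1; lra.
  - exfalso. assert (S <= S - eps); [|lra].
    apply HS2. intros x [F [HF ->]]. apply Rnot_lt_le; intros Hc. apply Hn; exists F; auto.
Qed.

End UnconditionalSums.

Lemma Rabs_tsum_approx_uniform {P T} (h : P -> T -> R) (L : list P) eps : 0 < eps ->
  exists J0 : list T, forall J, NoDup J -> incl J0 J -> forall p, In p L ->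
    Rabs (tsum (h p)) <= lsum (fun x => Rabs (h p x)) J + eps.
Proof.
  intros He. induction L as [|p L IH].
  - exists nil. intros; contradiction.
  - destruct IH as [J1 H1]. destruct (Rabs_tsum_approx (h p) eps He) as [J2 H2].
    exists (J1 ++ J2). intros J HJ Hi q [<-|Hq].
    + apply H2; auto. intros x Hx; apply Hi, in_or_app; auto.
    + apply H1; auto. intros x Hx; apply Hi, in_or_app; auto.
Qed.

(** * Cauchy-Schwarz and discrete Young inequalities *)

Lemma amgm_param (p q t : R) : 0 < t -> p * q <= (t * p ^ 2 + q ^ 2 / t) / 2.
Proof.
  intros Ht.
  assert (0 <= (t * p - q) ^ 2 / t) by (apply Rmult_le_pos; [apply pow2_ge_0| left; apply Rinv_0_lt_compat; auto]).
  assert ((t * p - q) ^ 2 / t = t * p ^ 2 - 2 * p * q + q ^ 2 / t) by (field; lra). lra.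
Qed.

(* Optimising the parameter of [amgm_param]: take [t = sqrt (Z / Y)]. *)
Lemma le_sqrt_mul_of_amgm (S Y Z : R) : 0 <= Y -> 0 <= Z ->
  (forall t, 0 < t -> S <= (t * Y + Z / t) / 2) -> S <= sqrt (Y * Z).
Proof.
  intros HY HZ H.
  destruct (Rle_lt_or_eq_dec 0 Y HY) as [Yp|<-]; destruct (Rle_lt_or_eq_dec 0 Z HZ) as [Zp|<-].
  - assert (sY : 0 < sqrt Y) by (apply sqrt_lt_R0; auto).
    assert (sZ : 0 < sqrt Z) by (apply sqrt_lt_R0; auto).
    specialize (H (sqrt Z / sqrt Y) ltac:(apply Rdiv_lt_0_compat; auto)).
    rewrite sqrt_mult by lra.
    assert (E : (sqrt Z / sqrt Y * Y + Z / (sqrt Z / sqrt Y)) / 2 = sqrt Y * sqrt Z).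
    { rewrite <- (sqrt_sqrt Y HY) at 2. rewrite <- (sqrt_sqrt Z HZ) at 2. field. lra. }
    lra.
  - rewrite Rmult_0_r, sqrt_0. apply Rnot_lt_le; intros Hs.
    specialize (H (S / (Y + 1)) ltac:(apply Rdiv_lt_0_compat; lra)).
    replace ((S / (Y + 1) * Y + 0 / (S / (Y + 1))) / 2) with (S * (Y / (Y + 1)) / 2) in H by (field; lra).
    assert (Y / (Y + 1) < 1) by (apply Rmult_lt_reg_r with (Y + 1); [lra|]; field_simplify; lra).
    nra.
  - rewrite Rmult_0_l, sqrt_0. apply Rnot_lt_le; intros Hs.
    specialize (H ((Z + 1) / S) ltac:(apply Rdiv_lt_0_compat; lra)).
    replace (((Z + 1) / S * 0 + Z / ((Z + 1) / S)) / 2) with (S * (Z / (Z + 1)) / 2) in H by (field; lra).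
    assert (Z / (Z + 1) < 1) by (apply Rmult_lt_reg_r with (Z + 1); [lra|]; field_simplify; lra).
    nra.
  - rewrite Rmult_0_l, sqrt_0. specialize (H 1 Rlt_0_1). lra.
Qed.

Lemma lsum_cauchy_schwarz {T} (f g : T -> R) l :
  lsum (fun x => f x * g x) l <= sqrt (lsum (fun x => f x ^ 2) l * lsum (fun x => g x ^ 2) l).
Proof.
  apply le_sqrt_mul_of_amgm; try (apply lsum_nonneg; intros; apply pow2_ge_0).
  intros t Ht.
  apply Rle_trans with (lsum (fun x => t / 2 * f x ^ 2 + / (2 * t) * g x ^ 2) l).
  - apply lsum_le. intros x _. pose proof (amgm_param (f x) (g x) t Ht).
    replace (t / 2 * f x ^ 2 + / (2 * t) * g x ^ 2) with ((t * f x ^ 2 + g x ^ 2 / t) / 2)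
      by (field; lra). lra.
  - rewrite lsum_plus, !lsum_scal. right; field; lra.
Qed.

Lemma lsum_minkowski {T} (f g : T -> R) l :
  sqrt (lsum (fun x => (f x + g x) ^ 2) l)
  <= sqrt (lsum (fun x => f x ^ 2) l) + sqrt (lsum (fun x => g x ^ 2) l).
Proof.
  set (F := lsum (fun x => f x ^ 2) l). set (G := lsum (fun x => g x ^ 2) l).
  assert (HF : 0 <= F) by (apply lsum_nonneg; intros; apply pow2_ge_0).
  assert (HG : 0 <= G) by (apply lsum_nonneg; intros; apply pow2_ge_0).
  pose proof (sqrt_pos F). pose proof (sqrt_pos G).
  rewrite <- (sqrt_pow2 (sqrt F + sqrt G)) by lra. apply sqrt_le_1_alt.
  rewrite (lsum_ext _ (fun x => f x ^ 2 + g x ^ 2 + 2 * (f x * g x))) by (intros; ring).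
  rewrite !lsum_plus, lsum_scal. fold F G.
  pose proof (lsum_cauchy_schwarz f g l) as Hcs. rewrite sqrt_mult_alt in Hcs by auto.
  fold F G in Hcs. pose proof (sqrt_sqrt F HF). pose proof (sqrt_sqrt G HG). nra.
Qed.

Lemma lsum_sqrt_mul_le {T} (a b : T -> R) (A B : R) :
  (forall x, 0 <= a x) -> (forall x, 0 <= b x) -> partial_sums_le a A -> partial_sums_le b B ->
  partial_sums_le (fun x => sqrt (a x) * sqrt (b x)) (sqrt (A * B)).
Proof.
  intros Ha Hb HA HB F HF. eapply Rle_trans; [apply lsum_cauchy_schwarz|].
  apply sqrt_le_1_alt.
  rewrite (lsum_ext _ a), (lsum_ext (fun x => sqrt (b x) ^ 2) b) by (intros; apply pow2_sqrt; auto).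
  apply Rmult_le_compat; try (apply lsum_nonneg; auto); auto.
Qed.

Lemma lsum2_amgm_le {A B} (K : list A) (J : list B) (c : A -> R) (b a : A -> B -> R) X Y :
  (forall k j, 0 <= b k j) ->
  lsum (fun k => lsum (fun j => b k j * a k j ^ 2) J) K <= X ->
  lsum (fun k => c k ^ 2 * lsum (fun j => b k j) J) K <= Y ->
  lsum (fun k => lsum (fun j => c k * b k j * a k j) J) K <= sqrt (X * Y).
Proof.
  intros Hb HX HY.
  assert (0 <= X).
  { eapply Rle_trans; [|exact HX]. apply lsum_nonneg; intros k.
    apply lsum_nonneg; intros j. specialize (Hb k j). nra. }
  assert (0 <= Y).
  { eapply Rle_trans; [|exact HY]. apply lsum_nonneg; intros k.
    apply Rmult_le_pos; [apply pow2_ge_0|]. apply lsum_nonneg; auto. }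
  apply le_sqrt_mul_of_amgm; auto. intros t Ht.
  apply Rle_trans with (lsum (fun k => t / 2 * lsum (fun j => b k j * a k j ^ 2) J
                                      + / (2 * t) * (c k ^ 2 * lsum (fun j => b k j) J)) K).
  - apply lsum_le; intros k _.
    rewrite <- (lsum_scal _ (c k ^ 2)), <- !lsum_scal, <- lsum_plus.
    apply lsum_le; intros j _.
    pose proof (amgm_param (a k j) (c k) t Ht). specialize (Hb k j).
    replace (t / 2 * (b k j * a k j ^ 2) + / (2 * t) * (c k ^ 2 * b k j))
      with (b k j * ((t * a k j ^ 2 + c k ^ 2 / t) / 2)) by (field; lra).
    nra.
  - rewrite lsum_plus, !lsum_scal.
    assert (0 < / (2 * t)) by (apply Rinv_0_lt_compat; lra).
    replace ((t * X + Y / t) / 2) with (t / 2 * X + / (2 * t) * Y) by (field; lra).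
    apply Rplus_le_compat; apply Rmult_le_compat_l; lra.
Qed.

Section DiscreteYoung.
Context {T : Type} (sub : T -> T -> T)
  (sub_inj_l : forall k j j', sub k j = sub k j' -> j = j')
  (sub_inj_r : forall k k' j, sub k j = sub k' j -> k = k').
Variables (a b c : T -> R) (Sa Sb Sc : R).
Hypotheses (Ha : forall x, 0 <= a x) (Hb : forall x, 0 <= b x) (Hc : forall x, 0 <= c x)
  (HSa : partial_sums_le (fun x => a x ^ 2) Sa) (HSb : partial_sums_le b Sb)
  (HSc : partial_sums_le (fun x => c x ^ 2) Sc).

Let HSa0 : 0 <= Sa := partial_sums_le_nonneg _ _ HSa.
Let HSb0 : 0 <= Sb := partial_sums_le_nonneg _ _ HSb.

Let sqrt_mul_sq_l : sqrt ((Sb * Sa) * (Sb * Sc)) = Sb * sqrt (Sa * Sc).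
Proof.
  replace ((Sb * Sa) * (Sb * Sc)) with (Sb ^ 2 * (Sa * Sc)) by ring.
  rewrite sqrt_mult_alt by (apply pow2_ge_0). rewrite sqrt_pow2; auto.
Qed.

Let shifted_sums_le (f : T -> R) M (j : T) (K : list T) :
  partial_sums_le f M -> NoDup K -> lsum (fun k => f (sub k j)) K <= M.
Proof.
  intros Hf HK. rewrite <- (lsum_map f (fun k => sub k j)). apply Hf.
  apply NoDup_map_inj; auto. intros; eapply sub_inj_r; eauto.
Qed.

Lemma young_conv_l K J : NoDup K -> NoDup J ->
  lsum (fun k => lsum (fun j => c k * b j * a (sub k j)) J) K <= Sb * sqrt (Sa * Sc).
Proof.
  intros HK HJ. rewrite <- sqrt_mul_sq_l.
  apply (lsum2_amgm_le K J c (fun _ j => b j) (fun k j => a (sub k j))); auto.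
  - rewrite lsum_swap.
    apply Rle_trans with (lsum (fun j => Sa * b j) J).
    + apply lsum_le; intros j _.
      rewrite lsum_scal, Rmult_comm. apply Rmult_le_compat_r; auto.
      apply (shifted_sums_le (fun x => a x ^ 2)); auto.
    + rewrite lsum_scal, Rmult_comm. apply Rmult_le_compat_r; auto.
  - rewrite (lsum_ext _ (fun k => lsum b J * c k ^ 2)) by (intros; apply Rmult_comm).
    rewrite lsum_scal. apply Rmult_le_compat; auto; apply lsum_nonneg; auto.
    intros; apply pow2_ge_0.
Qed.

Lemma young_conv_r K J : NoDup K -> NoDup J ->
  lsum (fun k => lsum (fun j => c k * a j * b (sub k j)) J) K <= Sb * sqrt (Sa * Sc).
Proof.
  intros HK HJ. rewrite <- sqrt_mul_sq_l.
  rewrite (lsum_ext _ (fun k => lsum (fun j => c k * b (sub k j) * a j) J))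
    by (intros; apply lsum_ext; intros; ring).
  apply (lsum2_amgm_le K J c (fun k j => b (sub k j)) (fun _ j => a j)); auto.
  - rewrite lsum_swap.
    apply Rle_trans with (lsum (fun j => Sb * a j ^ 2) J).
    + apply lsum_le; intros j _. rewrite (lsum_ext _ (fun k => a j ^ 2 * b (sub k j))) by (intros; ring).
      rewrite lsum_scal, Rmult_comm. apply Rmult_le_compat_r; [apply pow2_ge_0|].
      apply shifted_sums_le; auto.
    + rewrite lsum_scal. apply Rmult_le_compat_l; auto.
  - apply Rle_trans with (lsum (fun k => Sb * c k ^ 2) K).
    + apply lsum_le; intros k _. rewrite Rmult_comm. apply Rmult_le_compat_r; [apply pow2_ge_0|].
      rewrite <- (lsum_map b (sub k)). apply HSb.
      apply NoDup_map_inj; auto. intros; eapply sub_inj_l; eauto.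
    + rewrite lsum_scal. apply Rmult_le_compat_l; auto.
Qed.

End DiscreteYoung.

(** * Lattice sums *)

Lemma Rpower_one s : Rpower 1 s = 1.
Proof. unfold Rpower. rewrite ln_1, Rmult_0_r, exp_0. reflexivity. Qed.

Lemma Rpower_pos x s : 0 < Rpower x s.
Proof. apply exp_pos. Qed.

Lemma exp_le x y : x <= y -> exp x <= exp y.
Proof. intros [H|H]; [left; apply exp_increasing; auto|subst; lra]. Qed.

Lemma ln_le x y : 0 < x -> x <= y -> ln x <= ln y.
Proof. intros Hx [H|H]; [left; apply ln_increasing; auto|subst; lra]. Qed.

Lemma Rpower_le_npow x y s : 0 < x <= y -> s <= 0 -> Rpower y s <= Rpower x s.
Proof.
  intros Hxy Hs. unfold Rpower. apply exp_le.
  assert (ln x <= ln y) by (apply ln_le; lra). nra.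
Qed.

Lemma Rpower_third_cube x : 0 < x -> Rpower x (1/3) ^ 3 = x.
Proof.
  intros Hx. rewrite <- Rpower_pow, Rpower_mult by apply Rpower_pos.
  replace (1/3 * INR 3) with 1 by (simpl; field). apply Rpower_1; auto.
Qed.

Definition zweight (n : Z) : R := Rpower (1 + IZR n ^ 2) (-(2/3)).

Lemma zweight_nonneg n : 0 <= zweight n.
Proof. left; apply Rpower_pos. Qed.

Lemma zweight_opp n : zweight (- n) = zweight n.
Proof. unfold zweight. rewrite opp_IZR. f_equal. ring. Qed.

(* Comparison with [- 3 y^(-1/3)], an antiderivative of [y^(-4/3)]. *)
Lemma zweight_telescope (y : R) : 1 <= y ->
  Rpower (1 + (y + 1) ^ 2) (-(2/3)) <= 3 * (Rpower y (-(1/3)) - Rpower (y + 1) (-(1/3))).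
Proof.
  intros Hy. set (x := y + 1).
  set (a := Rpower x (1/3)). set (b := Rpower y (1/3)).
  assert (Ha3 : a ^ 3 = x) by (apply Rpower_third_cube; unfold x; lra).
  assert (Hb3 : b ^ 3 = y) by (apply Rpower_third_cube; lra).
  assert (Ha : 0 < a) by apply Rpower_pos. assert (Hb : 0 < b) by apply Rpower_pos.
  assert (Hab : b <= a) by (apply Rle_Rpower_l; unfold x; lra).
  assert (Hb1 : 1 <= b) by (rewrite <- (Rpower_one (1/3)); apply Rle_Rpower_l; lra).
  eapply Rle_trans. { apply Rpower_le_npow with (x := x ^ 2); [split; unfold x; nra|lra]. }
  rewrite !Rpower_Ropp. fold a b.
  assert (E : Rpower (x ^ 2) (2/3) = a ^ 4).
  { rewrite <- Ha3, <- pow_mult. simpl (3 * 2)%nat.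
    rewrite <- Rpower_pow, Rpower_mult, <- Rpower_pow by auto. f_equal. simpl. field. }
  rewrite E.
  assert (H1 : 1 <= 3 * a ^ 2 * (a - b)).
  { assert (a ^ 3 - b ^ 3 = 1) by (rewrite Ha3, Hb3; unfold x; lra).
    assert (a ^ 3 - b ^ 3 = (a - b) * (a ^ 2 + a * b + b ^ 2)) by ring.
    assert (a ^ 2 + a * b + b ^ 2 <= 3 * a ^ 2) by nra.
    assert ((a - b) * (a ^ 2 + a * b + b ^ 2) <= (a - b) * (3 * a ^ 2))
      by (apply Rmult_le_compat_l; lra).
    nra. }
  apply (Rmult_le_reg_r (a ^ 4 * b)); [apply Rmult_lt_0_compat; [apply pow_lt|]; auto|].
  replace (/ a ^ 4 * (a ^ 4 * b)) with b by (field; lra).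
  replace (3 * (/ b - / a) * (a ^ 4 * b)) with (3 * a ^ 3 * (a - b)) by (field; lra).
  nra.
Qed.

Lemma lsum_zweight_pos_le (N : nat) :
  lsum zweight (map Z.of_nat (seq 1 (S N))) <= 4 - 3 * Rpower (INR (S N)) (-(1/3)).
Proof.
  induction N as [|N IH].
  - cbn. rewrite Rpower_one. unfold zweight.
    replace (1 + IZR 1 ^ 2) with 2 by (simpl; lra).
    assert (Rpower 2 (-(2/3)) <= 1).
    { rewrite <- (Rpower_one (-(2/3))). apply Rpower_le_npow; lra. } lra.
  - rewrite seq_S, map_app, lsum_app, (lsum_map zweight Z.of_nat (_ :: nil)), lsum_cons.
    unfold zweight at 2. rewrite <- INR_IZR_INZ.
    replace (1 + S N)%nat with (S (S N)) by lia. rewrite !(S_INR (S N)).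
    assert (1 <= INR (S N)) by (apply (le_INR 1); lia).
    pose proof (zweight_telescope (INR (S N)) H).
    assert (lsum (fun x => zweight (Z.of_nat x)) nil = 0) by reflexivity. lra.
Qed.

Lemma lsum_zweight_range_le (N : nat) :
  lsum zweight (map Z.of_nat (seq 0 (S N)) ++ map (fun n => Z.opp (Z.of_nat n)) (seq 1 N)) <= 9.
Proof.
  rewrite lsum_app. cbn [seq map]. rewrite lsum_cons. change (Z.of_nat 0) with 0%Z.
  rewrite (lsum_map zweight (fun n => Z.opp (Z.of_nat n))).
  rewrite (lsum_ext (fun x => zweight (- Z.of_nat x)) (fun x => zweight (Z.of_nat x)))
    by (intros; apply zweight_opp).
  rewrite <- (lsum_map zweight Z.of_nat).
  assert (zweight 0 = 1) by (unfold zweight; simpl; rewrite Rmult_0_l, Rplus_0_r; apply Rpower_one).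
  destruct N as [|N].
  - unfold lsum; simpl. lra.
  - pose proof (lsum_zweight_pos_le N). pose proof (Rpower_pos (INR (S N)) (-(1/3))). lra.
Qed.

Lemma zweight_partial_sums_le : partial_sums_le zweight 9.
Proof.
  intros S HS.
  set (N := fold_right (fun s acc => (Z.to_nat (Z.abs s) + acc)%nat) 0%nat S).
  assert (HN : forall s, In s S -> (Z.to_nat (Z.abs s) <= N)%nat).
  { unfold N; clear. induction S as [|a S IH]; simpl; [tauto|].
    intros s [->|H]; [lia|]. specialize (IH s H). lia. }
  eapply Rle_trans; [|apply (lsum_zweight_range_le N)].
  apply lsum_incl; auto using zweight_nonneg.
  intros s Hs. specialize (HN s Hs). apply in_or_app.
  destruct (Z_le_gt_dec 0 s).
  - left. apply in_map_iff. exists (Z.to_nat s). split; [lia|]. apply in_seq. lia.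
  - right. apply in_map_iff. exists (Z.to_nat (- s)). split; [lia|]. apply in_seq. lia.
Qed.

Definition lprod {A B} (l1 : list A) (l2 : list B) : list (A * B) :=
  flat_map (fun a => map (fun b => (a, b)) l2) l1.

Lemma in_lprod {A B} (l1 : list A) (l2 : list B) a b : In a l1 -> In b l2 -> In (a, b) (lprod l1 l2).
Proof. intros H1 H2. apply in_flat_map. exists a. split; auto. apply in_map; auto. Qed.

Lemma lsum_lprod {A B} (h1 : A -> R) (h2 : B -> R) l1 l2 :
  lsum (fun p => h1 (fst p) * h2 (snd p)) (lprod l1 l2) = lsum h1 l1 * lsum h2 l2.
Proof.
  induction l1 as [|a l1 IH]; [unfold lsum; simpl; lra|].
  change (lprod (a :: l1) l2) with (map (fun b => (a, b)) l2 ++ lprod l1 l2).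
  rewrite lsum_app, IH, lsum_map, lsum_cons. cbn [fst snd]. rewrite lsum_scal. ring.
Qed.

Lemma partial_sums_le_prod {A B} (h1 : A -> R) (h2 : B -> R) M1 M2 :
  (forall x, 0 <= h1 x) -> (forall x, 0 <= h2 x) ->
  partial_sums_le h1 M1 -> partial_sums_le h2 M2 ->
  partial_sums_le (fun p => h1 (fst p) * h2 (snd p)) (M1 * M2).
Proof.
  intros H1 H2 HM1 HM2 P HP.
  destruct (NoDup_cover (map fst P)) as [S1 [HS1 I1]].
  destruct (NoDup_cover (map snd P)) as [S2 [HS2 I2]].
  eapply Rle_trans.
  - apply (lsum_incl _ P (lprod S1 S2)); auto.
    + intros; apply Rmult_le_pos; auto.
    + intros [a b] Hab. apply in_lprod; [apply I1|apply I2]; apply in_map_iff; exists (a, b); auto.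
  - rewrite lsum_lprod. apply Rmult_le_compat; try apply lsum_nonneg; auto.
Qed.

Section LatticeGeometry.
Variable d : nat.
Implicit Types k j : Zd d.

Lemma Zd_eq (a b : Zd d) : (forall i, proj1_sig a i = proj1_sig b i) -> a = b.
Proof.
  destruct a as [fa pa], b as [fb pb]; simpl; intros H.
  assert (fa = fb) by (apply functional_extensionality; auto). subst.
  f_equal. apply proof_irrelevance.
Qed.

Lemma Zd_sub_inj_l k j j' : Zd_sub d k j = Zd_sub d k j' -> j = j'.
Proof.
  intros E. apply Zd_eq. intros i. assert (H := f_equal (fun z => proj1_sig z i) E).
  simpl in H. lia.
Qed.

Lemma Zd_sub_inj_r k k' j : Zd_sub d k j = Zd_sub d k' j -> k = k'.
Proof.
  intros E. apply Zd_eq. intros i. assert (H := f_equal (fun z => proj1_sig z i) E).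
  simpl in H. lia.
Qed.

Lemma kcomp_sub k j i : kcomp (Zd_sub d k j) i = kcomp k i - kcomp j i.
Proof. apply minus_IZR. Qed.

Lemma knorm2_lsum k : knorm2 d k = lsum (fun i => kcomp k i ^ 2) (seq 0 d).
Proof. reflexivity. Qed.

Lemma knorm_ge0 k : 0 <= knorm d k.
Proof. apply sqrt_pos. Qed.

Lemma knorm2_nonneg k : 0 <= knorm2 d k.
Proof. apply lsum_nonneg. intros; apply pow2_ge_0. Qed.

Lemma knorm2_ge1 k : knorm2 d k <> 0 -> 1 <= knorm2 d k.
Proof.
  intros H. enough (Hk : forall i, kcomp k i ^ 2 = 0 \/ 1 <= kcomp k i ^ 2).
  { destruct (lsum_zero_or_ge1 _ (seq 0 d) Hk); [contradiction|assumption]. }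
  intros i. unfold kcomp. destruct (Z.eq_dec (proj1_sig k i) 0) as [->|Hz]; [left; simpl; ring|].
  right. destruct (Z_lt_le_dec 0 (proj1_sig k i)).
  - assert (1 <= IZR (proj1_sig k i)) by (apply IZR_le; lia). nra.
  - assert (IZR (proj1_sig k i) <= -1) by (apply IZR_le; lia). nra.
Qed.

Lemma knorm2_eq0 k : knorm2 d k = 0 -> k = Zd_zero d.
Proof.
  intros H. apply Zd_eq. intros i. simpl.
  destruct (le_lt_dec d i) as [Hi|Hi]; [apply (proj2_sig k i Hi)|].
  assert (Hk := lsum_eq0 (fun i => kcomp k i ^ 2) (seq 0 d) (fun _ => pow2_ge_0 _) H i).
  assert (E : kcomp k i ^ 2 = 0) by (apply Hk, in_seq; lia).
  apply eq_IZR. unfold kcomp in E. nra.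
Qed.

Lemma knorm_ge1 k : knorm2 d k <> 0 -> 1 <= knorm d k.
Proof. intros H. unfold knorm. rewrite <- sqrt_1. apply sqrt_le_1_alt, knorm2_ge1, H. Qed.

Lemma knorm_triangle k j : knorm d k <= knorm d j + knorm d (Zd_sub d k j).
Proof.
  unfold knorm. rewrite !knorm2_lsum.
  rewrite (lsum_ext (fun i => kcomp k i ^ 2) (fun i => (kcomp j i + kcomp (Zd_sub d k j) i) ^ 2))
    by (intros; rewrite kcomp_sub; ring).
  apply lsum_minkowski.
Qed.

Lemma kcomp_sq_le k i : (i < d)%nat -> kcomp k i ^ 2 <= knorm2 d k.
Proof. intros Hi. apply (lsum_term (fun i => kcomp k i ^ 2)); [intros; apply pow2_ge_0|apply in_seq; lia]. Qed.

Lemma Rabs_kcomp_le k i : (i < d)%nat -> Rabs (kcomp k i) <= knorm d k.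
Proof.
  intros Hi. unfold knorm. rewrite <- sqrt_Rsqr_abs. apply sqrt_le_1_alt.
  pose proof (kcomp_sq_le k i Hi). unfold Rsqr. simpl in *. lra.
Qed.

Lemma Rabs_kcomp_mul_le k i m : (i < d)%nat -> (m < d)%nat ->
  Rabs (kcomp k i) * Rabs (kcomp k m) <= knorm2 d k.
Proof.
  intros Hi Hm. pose proof (kcomp_sq_le k i Hi). pose proof (kcomp_sq_le k m Hm).
  rewrite <- (pow2_abs (kcomp k i)) in H. rewrite <- (pow2_abs (kcomp k m)) in H0.
  pose proof (pow2_ge_0 (Rabs (kcomp k i) - Rabs (kcomp k m))). nra.
Qed.

End LatticeGeometry.

Lemma Rpower_npow_le_of_le_pow (s P r : R) (n : nat) : 1 <= s -> 0 < P ->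
  P <= (2 * s) ^ n -> (n <= 3)%nat -> 2 / 3 * INR n <= r ->
  Rpower s (- r) <= 4 * Rpower P (-(2/3)).
Proof.
  intros Hs HP HPs Hn Hr.
  assert (Hl : ln P <= INR n * ln 2 + INR n * ln s).
  { rewrite <- Rmult_plus_distr_l, <- ln_mult, <- ln_pow by lra. apply ln_le; auto. }
  assert (Hn3 : INR n <= 3) by (replace 3 with (INR 3) by (simpl; ring); apply le_INR; auto).
  assert (L2 : 0 < ln 2) by (rewrite <- ln_1; apply ln_increasing; lra).
  assert (Ls : 0 <= ln s) by (rewrite <- ln_1; apply ln_le; lra).
  assert (E4 : 4 = exp (2 * ln 2)).
  { replace (2 * ln 2) with (ln 2 + ln 2) by ring. rewrite exp_plus, exp_ln; lra. }
  unfold Rpower. rewrite E4, <- exp_plus. apply exp_le. nra.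
Qed.

Definition zc {d} (j : Zd d) (i : nat) : Z := proj1_sig j i.

Section LatticeSum.
Variable d : nat.
Hypothesis hd : d = 2%nat \/ d = 3%nat.

Lemma coord_weight_le (j : Zd d) :
  (1 + IZR (zc j 0) ^ 2) * ((1 + IZR (zc j 1) ^ 2) * (1 + IZR (zc j 2) ^ 2))
  <= (2 * Rmax 1 (knorm2 d j)) ^ d.
Proof.
  assert (Hm : 1 <= Rmax 1 (knorm2 d j)) by apply Rmax_l.
  assert (Hs : knorm2 d j <= Rmax 1 (knorm2 d j)) by apply Rmax_r.
  set (x := IZR (zc j 0) ^ 2). set (y := IZR (zc j 1) ^ 2). set (z := IZR (zc j 2) ^ 2).
  assert (0 <= x) by apply pow2_ge_0. assert (0 <= y) by apply pow2_ge_0.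
  assert (0 <= z) by apply pow2_ge_0.
  destruct hd; subst d.
  - assert (Ez : z = 0) by (unfold z, zc; rewrite (proj2_sig j 2%nat) by lia; simpl; ring).
    assert (knorm2 2 j = x + y) by (unfold knorm2, Rsum_range, kcomp, x, y, zc; cbn [seq fold_right]; ring).
    rewrite Ez. simpl. nra.
  - assert (knorm2 3 j = x + y + z) by (unfold knorm2, Rsum_range, kcomp, x, y, z, zc; cbn [seq fold_right]; ring).
    assert (0 <= x * y) by nra. assert (0 <= x * y * z) by nra.
    assert ((1 + x) * ((1 + y) * (1 + z)) <= (1 + (x + y + z)) ^ 3) by (simpl; nra).
    assert ((1 + (x + y + z)) ^ 3 <= (2 * Rmax 1 (knorm2 3 j)) ^ 3) by (apply pow_incr; lra).
    lra.
Qed.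

(* Dominating |j|^(-2r) by a product of one-dimensional weights makes the lattice
   sum factorise: the product of the (1 + j_i^2) is at most (2|j|^2)^d, and
   2d/3 <= (d+1)/2 < r because d <= 3. *)
Lemma Apow_npow_le_zweight r (Hr : (INR d + 1) / 2 < r) (j : Zd d) :
  Apow d j (-r) <= 4 * (zweight (zc j 0) * (zweight (zc j 1) * zweight (zc j 2))).
Proof.
  assert (Hw : 0 <= zweight (zc j 0) * (zweight (zc j 1) * zweight (zc j 2)))
    by (repeat apply Rmult_le_pos; apply zweight_nonneg).
  unfold Apow. destruct (Req_EM_T (knorm2 d j) 0) as [E|E]; [lra|].
  assert (Hp : forall z, 0 < 1 + IZR z ^ 2) by (intros; pose proof (pow2_ge_0 (IZR z)); lra).
  unfold zweight. rewrite !Rpower_mult_distr by (try apply Rmult_lt_0_compat; auto).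
  pose proof (knorm2_ge1 d j E) as H1.
  pose proof (coord_weight_le j) as Hc. rewrite Rmax_right in Hc by lra.
  apply (Rpower_npow_le_of_le_pow _ _ r d); auto.
  - repeat apply Rmult_lt_0_compat; auto.
  - destruct hd; subst; lia.
  - destruct hd; subst; simpl in *; lra.
Qed.

Definition lattice_const : R := 4 * (9 * (9 * 9)).

Lemma Apow_npow_partial_sums_le r : (INR d + 1) / 2 < r ->
  partial_sums_le (fun j => Apow d j (-r)) lattice_const.
Proof.
  intros Hr J HJ. eapply Rle_trans; [apply lsum_le; intros j _; apply (Apow_npow_le_zweight r Hr j)|].
  rewrite lsum_scal. apply Rmult_le_compat_l; [lra|].
  set (phi := fun j : Zd d => (zc j 0, (zc j 1, zc j 2))).
  change (lsum (fun j => zweight (fst (phi j)) * (zweight (fst (snd (phi j))) * zweight (snd (snd (phi j))))) J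
    <= 9 * (9 * 9)).
  rewrite <- (lsum_map (fun p => zweight (fst p) * (zweight (fst (snd p)) * zweight (snd (snd p))))).
  apply (partial_sums_le_prod zweight (fun q => zweight (fst q) * zweight (snd q)));
    auto using zweight_nonneg, zweight_partial_sums_le, partial_sums_le_prod.
  - intros; apply Rmult_le_pos; apply zweight_nonneg.
  - apply NoDup_map_inj; auto. intros x y Exy. unfold phi in Exy. inversion Exy.
    apply Zd_eq. intros i. destruct i as [|[|[|i]]]; auto.
    rewrite (proj2_sig x), (proj2_sig y); auto; destruct hd; lia.
Qed.

End LatticeSum.

(** * Fourier-side bounds *)

(* [tsumC] sums componentwise, and the l^1 norm of R^2 controls both components. *)
Definition Cnorm1 (z : Defs.C) : R := Rabs (fst z) + Rabs (snd z).

Lemma Cnorm1_nonneg z : 0 <= Cnorm1 z.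
Proof. unfold Cnorm1. pose proof (Rabs_pos (fst z)); pose proof (Rabs_pos (snd z)); lra. Qed.

Lemma Cnorm1_C0 : Cnorm1 C0 = 0.
Proof. unfold Cnorm1, C0; simpl. rewrite Rabs_R0. lra. Qed.

Lemma Cnorm1_add a b : Cnorm1 (Cadd a b) <= Cnorm1 a + Cnorm1 b.
Proof.
  unfold Cnorm1, Cadd; simpl.
  pose proof (Rabs_triang (fst a) (fst b)); pose proof (Rabs_triang (snd a) (snd b)); lra.
Qed.

Lemma Cnorm1_mul a b : Cnorm1 (Cmul a b) <= Cnorm1 a * Cnorm1 b.
Proof.
  unfold Cnorm1, Cmul; simpl.
  pose proof (Rabs_triang (fst a * fst b) (- (snd a * snd b))).
  pose proof (Rabs_triang (fst a * snd b) (snd a * fst b)).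
  rewrite Rabs_Ropp, !Rabs_mult in *.
  pose proof (Rabs_pos (fst a)); pose proof (Rabs_pos (snd a)).
  pose proof (Rabs_pos (fst b)); pose proof (Rabs_pos (snd b)).
  unfold Rminus. nra.
Qed.

Lemma Cnorm1_conj a : Cnorm1 (Cconj a) = Cnorm1 a.
Proof. unfold Cnorm1, Cconj; simpl. rewrite Rabs_Ropp. reflexivity. Qed.

Lemma Cnorm1_RtoC_mul c z : Cnorm1 (Cmul (RtoC c) z) = Rabs c * Cnorm1 z.
Proof.
  unfold Cnorm1, Cmul, RtoC; simpl.
  replace (c * fst z - 0 * snd z) with (c * fst z) by ring.
  replace (c * snd z + 0 * fst z) with (c * snd z) by ring. rewrite !Rabs_mult. ring.
Qed.

Lemma Cnorm1_Ci_mul z : Cnorm1 (Cmul Ci z) <= Cnorm1 z.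
Proof. eapply Rle_trans; [apply Cnorm1_mul|]. unfold Cnorm1, Ci; simpl. rewrite Rabs_R0, Rabs_R1. lra. Qed.

Lemma Cnorm1_Csum d f : Cnorm1 (Csum_range d f) <= Rsum_range d (fun i => Cnorm1 (f i)).
Proof.
  unfold Csum_range, Rsum_range. induction (seq 0 d); cbn [fold_right].
  - rewrite Cnorm1_C0; lra.
  - eapply Rle_trans; [apply Cnorm1_add|]. lra.
Qed.

Lemma Cmod_le_Cnorm1 z : Cmod z <= Cnorm1 z.
Proof.
  unfold Cmod, Cnorm2, Cnorm1.
  pose proof (Rabs_pos (fst z)); pose proof (Rabs_pos (snd z)).
  rewrite <- (sqrt_pow2 (Rabs (fst z) + Rabs (snd z))) by lra.
  apply sqrt_le_1_alt. rewrite <- (pow2_abs (fst z)), <- (pow2_abs (snd z)). nra.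
Qed.

Lemma Cnorm1_le_Cmod z : Cnorm1 z <= 2 * Cmod z.
Proof.
  unfold Cnorm1, Cmod, Cnorm2.
  replace 2 with (sqrt 4) at 1 by (replace 4 with (2 ^ 2) by ring; apply sqrt_pow2; lra).
  pose proof (Rabs_pos (fst z)); pose proof (Rabs_pos (snd z)).
  rewrite <- sqrt_mult_alt, <- (sqrt_pow2 (Rabs (fst z) + Rabs (snd z))) by lra.
  apply sqrt_le_1_alt. rewrite <- (pow2_abs (fst z)), <- (pow2_abs (snd z)).
  pose proof (pow2_ge_0 (Rabs (fst z) - Rabs (snd z))). nra.
Qed.

Lemma Cnorm1_tsumC_le {T} (f : T -> Defs.C) M :
  partial_sums_le (fun x => Cnorm1 (f x)) M -> Cnorm1 (tsumC f) <= 2 * M.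
Proof.
  intros H. unfold Cnorm1 at 1, tsumC; cbn [fst snd].
  assert (Hf : forall g : T -> R, (forall x, Rabs (g x) <= Cnorm1 (f x)) -> Rabs (tsum g) <= M).
  { intros g Hg. apply Rabs_tsum_le. intros F HF.
    eapply Rle_trans; [apply lsum_le; intros; apply Hg|]. apply H; auto. }
  pose proof (Hf (fun x => fst (f x)) (fun x => ltac:(unfold Cnorm1; pose proof (Rabs_pos (snd (f x))); lra))).
  pose proof (Hf (fun x => snd (f x)) (fun x => ltac:(unfold Cnorm1; pose proof (Rabs_pos (fst (f x))); lra))).
  lra.
Qed.

Lemma Cnorm1_tsumC_approx_uniform {P T} (h : P -> T -> Defs.C) (L : list P) eps : 0 < eps ->
  exists J0 : list T, forall J, NoDup J -> incl J0 J -> forall p, In p L ->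
    Cnorm1 (tsumC (h p)) <= lsum (fun x => Cnorm1 (h p x)) J + 2 * eps.
Proof.
  intros He.
  set (hr := fun (q : P * bool) x => if snd q then fst (h (fst q) x) else snd (h (fst q) x)).
  destruct (Rabs_tsum_approx_uniform hr (lprod L (true :: false :: nil)) eps He) as [J0 HJ0].
  exists J0. intros J HJ Hi p Hp.
  pose proof (HJ0 J HJ Hi (p, true) ltac:(apply in_lprod; simpl; auto)) as Hre.
  pose proof (HJ0 J HJ Hi (p, false) ltac:(apply in_lprod; simpl; auto)) as Him.
  unfold hr in Hre, Him; cbn [fst snd] in Hre, Him.
  unfold Cnorm1 at 1, tsumC; cbn [fst snd]. unfold Cnorm1. rewrite lsum_plus. lra.
Qed.

Definition vnorm d (f : field d) k : R := sqrt (vnorm2 d f k).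

Lemma vnorm2_nonneg d f k : 0 <= vnorm2 d f k.
Proof. apply lsum_nonneg. intros; unfold Cnorm2; nra. Qed.

Lemma vnorm_nonneg d f k : 0 <= vnorm d f k.
Proof. apply sqrt_pos. Qed.

Lemma vnorm_zero_mode d (f : field d) : (forall i, (i < d)%nat -> f (Zd_zero d) i = C0) ->
  vnorm d f (Zd_zero d) = 0.
Proof.
  intros H. unfold vnorm, vnorm2. rewrite Rsum_range_lsum.
  rewrite (lsum_ext _ (fun _ => 0)), lsum_const, Rmult_0_r; [apply sqrt_0|].
  intros i Hi. apply in_seq in Hi. rewrite H by lia. unfold Cnorm2, C0; simpl; ring.
Qed.

Lemma Cnorm1_comp_le d (f : field d) k i : (i < d)%nat -> Cnorm1 (f k i) <= 2 * vnorm d f k.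
Proof.
  intros Hi. eapply Rle_trans; [apply Cnorm1_le_Cmod|]. apply Rmult_le_compat_l; [lra|].
  apply sqrt_le_1_alt. apply (lsum_term (fun i => Cnorm2 (f k i))).
  - intros; unfold Cnorm2; nra.
  - apply in_seq; lia.
Qed.

Definition conv_term d (u v : field d) (k : Zd d) (m : nat) (j : Zd d) : Defs.C :=
  Cmul Ci (Cmul (Csum_range d (fun n => Cmul (u j n) (RtoC (kcomp (Zd_sub d k j) n))))
                (v (Zd_sub d k j) m)).

Lemma Bhat_conv_term d u v k : Bhat d u v k = leray d k (fun m => tsumC (conv_term d u v k m)).
Proof. reflexivity. Qed.

Lemma Cnorm1_conv_term_le d u v k m j : (m < d)%nat ->
  Cnorm1 (conv_term d u v k m j)
  <= 4 * INR d * (vnorm d u j * knorm d (Zd_sub d k j) * vnorm d v (Zd_sub d k j)).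
Proof.
  intros Hm. set (l := Zd_sub d k j).
  assert (Hdot : Cnorm1 (Csum_range d (fun n => Cmul (u j n) (RtoC (kcomp l n))))
                 <= INR d * (2 * vnorm d u j * knorm d l)).
  { eapply Rle_trans; [apply Cnorm1_Csum|]. rewrite Rsum_range_lsum.
    apply Rle_trans with (lsum (fun _ => 2 * vnorm d u j * knorm d l) (seq 0 d));
      [|rewrite lsum_const, length_seq; lra].
    apply lsum_le. intros n Hn. apply in_seq in Hn.
    eapply Rle_trans; [apply Cnorm1_mul|].
    replace (Cnorm1 (RtoC (kcomp l n))) with (Rabs (kcomp l n)) by (unfold Cnorm1, RtoC; simpl; rewrite Rabs_R0; lra).
    apply Rmult_le_compat; auto using Cnorm1_nonneg, Rabs_pos.
    - apply Cnorm1_comp_le; lia.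
    - apply Rabs_kcomp_le; lia. }
  unfold conv_term. fold l.
  eapply Rle_trans; [apply Cnorm1_Ci_mul|]. eapply Rle_trans; [apply Cnorm1_mul|].
  pose proof (Cnorm1_comp_le d v l m Hm). pose proof (vnorm_nonneg d u j).
  pose proof (knorm_ge0 d l). pose proof (vnorm_nonneg d v l). pose proof (pos_INR d).
  pose proof (Cnorm1_nonneg (Csum_range d (fun n => Cmul (u j n) (RtoC (kcomp l n))))).
  eapply Rle_trans; [apply Rmult_le_compat; eauto using Cnorm1_nonneg|]. nra.
Qed.

(* Since |k_i k_m| <= |k|^2, the Leray projection has norm at most 2 for [Cnorm1]. *)
Lemma Cnorm1_leray_le d k (a : nat -> Defs.C) i : (i < d)%nat ->
  Cnorm1 (leray d k a i) <= 2 * Rsum_range d (fun m => Cnorm1 (a m)).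
Proof.
  intros Hi. unfold leray.
  assert (Hs : 0 <= Rsum_range d (fun m => Cnorm1 (a m)))
    by (apply lsum_nonneg; intros; apply Cnorm1_nonneg).
  destruct (Req_EM_T (knorm2 d k) 0) as [E|E]; [rewrite Cnorm1_C0; lra|].
  assert (Hk : 0 < knorm2 d k) by (pose proof (knorm2_nonneg d k); lra).
  eapply Rle_trans; [apply Cnorm1_add|].
  assert (Cnorm1 (a i) <= Rsum_range d (fun m => Cnorm1 (a m))).
  { apply (lsum_term (fun m => Cnorm1 (a m))); [intros; apply Cnorm1_nonneg|apply in_seq; lia]. }
  rewrite Cnorm1_RtoC_mul.
  enough (Rabs (- kcomp k i / knorm2 d k) * Cnorm1 (Csum_range d (fun m => Cmul (RtoC (kcomp k m)) (a m)))
          <= Rsum_range d (fun m => Cnorm1 (a m))) by lra.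
  eapply Rle_trans; [apply Rmult_le_compat_l; [apply Rabs_pos|apply Cnorm1_Csum]|].
  rewrite !Rsum_range_lsum, <- lsum_scal. apply lsum_le. intros m Hm. apply in_seq in Hm.
  rewrite Cnorm1_RtoC_mul. unfold Rdiv.
  rewrite Rabs_mult, Rabs_Ropp, Rabs_inv, (Rabs_right (knorm2 d k)) by lra.
  pose proof (Rabs_kcomp_mul_le d k i m Hi ltac:(lia)).
  pose proof (Cnorm1_nonneg (a m)).
  assert (Rabs (kcomp k i) * Rabs (kcomp k m) * / knorm2 d k <= 1).
  { apply (Rmult_le_reg_r (knorm2 d k)); auto. rewrite Rmult_assoc, Rinv_l by lra. lra. }
  replace (Rabs (kcomp k i) * / knorm2 d k * (Rabs (kcomp k m) * Cnorm1 (a m)))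
    with (Rabs (kcomp k i) * Rabs (kcomp k m) * / knorm2 d k * Cnorm1 (a m)) by ring.
  nra.
Qed.

(** * The trilinear estimate *)

Lemma Apow_nonneg d k s : 0 <= Apow d k s.
Proof. unfold Apow. destruct (Req_EM_T _ _); [lra|left; apply Rpower_pos]. Qed.

Lemma gev_term_nonneg d r b a f k : 0 <= gev_term d r b a f k.
Proof.
  unfold gev_term. apply Rmult_le_pos; [apply Rmult_le_pos|apply vnorm2_nonneg].
  - apply Apow_nonneg.
  - left; apply exp_pos.
Qed.

Lemma Rpower_sqrt_double s t : 0 < s -> Rpower s t = Rpower (sqrt s) (2 * t).
Proof.
  intros Hs. unfold Rpower. f_equal. rewrite <- (sqrt_sqrt s) at 1 by lra.
  rewrite ln_mult by (apply sqrt_lt_R0; auto). ring.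
Qed.

Lemma sqrt_Rpower s t : 0 < s -> sqrt (Rpower s t) = Rpower (sqrt s) t.
Proof.
  intros Hs. rewrite Rpower_sqrt_double by auto. replace (2 * t) with (t + t) by ring.
  rewrite Rpower_plus, sqrt_square; auto. left; apply Rpower_pos.
Qed.

Lemma Apow_knorm d k s : knorm2 d k <> 0 -> Apow d k s = Rpower (knorm d k) (2 * s).
Proof.
  intros H. pose proof (knorm2_nonneg d k). unfold Apow, knorm.
  destruct (Req_EM_T _ _); [contradiction|]. apply Rpower_sqrt_double. lra.
Qed.

Lemma sqrt_gev_term d r b a f k : knorm2 d k <> 0 ->
  sqrt (gev_term d r b a f k) = Rpower (knorm d k) (r + 2 * a) * exp (b * knorm d k) * vnorm d f k.
Proof.
  intros H. pose proof (knorm2_nonneg d k). unfold gev_term, Apow.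
  destruct (Req_EM_T _ _); [contradiction|].
  rewrite !sqrt_mult_alt, sqrt_Rpower by
    (try apply Rmult_le_pos; try lra; left; auto using Rpower_pos, exp_pos).
  replace (2 * b * knorm d k) with (b * knorm d k + b * knorm d k) by ring.
  rewrite exp_plus, sqrt_square by (left; apply exp_pos). reflexivity.
Qed.

Lemma sqrt_Apow_npow d j r : knorm2 d j <> 0 -> sqrt (Apow d j (-r)) = Rpower (knorm d j) (-r).
Proof.
  intros H. unfold Apow. destruct (Req_EM_T _ _); [contradiction|].
  apply sqrt_Rpower. pose proof (knorm2_nonneg d j); lra.
Qed.

Lemma Rpower_shift_le (nk nj nl r : R) : 1 <= nj -> 1 <= nl -> 0 < nk <= nj + nl -> 1/2 <= r ->
  Rpower nk (r - 1/2) * nl <= Rpower 2 r * (Rpower nj (r + 1/2) + Rpower nl (r + 1/2)).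
Proof.
  intros Hj Hl Hk Hr. set (m := Rmax nj nl).
  assert (Hm1 : nj <= m) by apply Rmax_l. assert (Hm2 : nl <= m) by apply Rmax_r.
  assert (H1 : Rpower nk (r - 1/2) <= Rpower 2 (r - 1/2) * Rpower m (r - 1/2)).
  { rewrite Rpower_mult_distr by lra. apply Rle_Rpower_l; lra. }
  assert (H2 : Rpower 2 (r - 1/2) <= Rpower 2 r) by (apply Rle_Rpower; lra).
  assert (E : Rpower m (r - 1/2) * m = Rpower m (r + 1/2)).
  { rewrite <- (Rpower_1 m) at 2 by lra. rewrite <- Rpower_plus. f_equal; field. }
  assert (H3 : Rpower m (r + 1/2) <= Rpower nj (r + 1/2) + Rpower nl (r + 1/2)).
  { pose proof (Rpower_pos nl (r + 1/2)); pose proof (Rpower_pos nj (r + 1/2)).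
    unfold m, Rmax. destruct (Rle_dec nj nl); lra. }
  pose proof (Rpower_pos m (r - 1/2)). pose proof (Rpower_pos 2 (r - 1/2)).
  pose proof (Rpower_pos nk (r - 1/2)).
  apply Rle_trans with (Rpower 2 r * (Rpower m (r - 1/2) * m)); [|rewrite E; apply Rmult_le_compat_l; lra].
  apply Rle_trans with (Rpower 2 (r - 1/2) * Rpower m (r - 1/2) * nl); [apply Rmult_le_compat_r; lra|].
  rewrite Rmult_assoc. apply Rmult_le_compat; try lra; [apply Rmult_le_pos; lra|].
  apply Rmult_le_compat_l; lra.
Qed.

(* [nk], [nj], [nl] stand for |k|, |j|, |k - j|, and [W], [U], [V] for |w_k|, |u_j|, |v_(k-j)|. *)
Lemma weight_split_le (nk nj nl r b W U V : R) : 0 < nk -> 1 <= nj -> 1 <= nl -> nk <= nj + nl ->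
  1/2 < r -> 0 <= b -> 0 <= W -> 0 <= U -> 0 <= V ->
  Rpower nk (2 * r) * exp (2 * b * nk) * W * (U * nl * V)
  <= Rpower 2 r *
     (Rpower nk (r + 1/2) * exp (b * nk) * W * (exp (b * nj) * U) * (Rpower nl (r + 1/2) * exp (b * nl) * V)
      + Rpower nk (r + 1/2) * exp (b * nk) * W * (Rpower nj (r + 1/2) * exp (b * nj) * U) * (exp (b * nl) * V)).
Proof.
  intros Hk Hj Hl Htri Hr Hb HW HU HV.
  set (P := Rpower nk (r + 1/2) * exp (b * nk) * W).
  assert (HP : 0 <= P) by (unfold P; pose proof (Rpower_pos nk (r + 1/2)); pose proof (exp_pos (b * nk));
                           apply Rmult_le_pos; [apply Rmult_le_pos|]; lra).
  assert (Hexp : exp (b * nk) <= exp (b * nj) * exp (b * nl)) by (rewrite <- exp_plus; apply exp_le; nra).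
  assert (Hpow := Rpower_shift_le nk nj nl r Hj Hl ltac:(lra) ltac:(lra)).
  replace (Rpower nk (2 * r) * exp (2 * b * nk) * W * (U * nl * V))
    with (P * (exp (b * nk) * U * V) * (Rpower nk (r - 1/2) * nl)).
  2:{ unfold P. replace (2 * b * nk) with (b * nk + b * nk) by ring.
      replace (2 * r) with ((r + 1/2) + (r - 1/2)) by ring.
      rewrite exp_plus, (Rpower_plus (r + 1/2) (r - 1/2)). ring. }
  replace (Rpower 2 r * (P * (exp (b * nj) * U) * (Rpower nl (r + 1/2) * exp (b * nl) * V)
                         + P * (Rpower nj (r + 1/2) * exp (b * nj) * U) * (exp (b * nl) * V)))
    with (P * (exp (b * nj) * exp (b * nl) * U * V) * (Rpower 2 r * (Rpower nj (r + 1/2) + Rpower nl (r + 1/2))))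
    by ring.
  pose proof (exp_pos (b * nk)). pose proof (Rpower_pos nk (r - 1/2)).
  apply Rmult_le_compat; auto.
  - apply Rmult_le_pos; auto. repeat apply Rmult_le_pos; lra.
  - apply Rmult_le_pos; lra.
  - apply Rmult_le_compat_l; auto. apply Rmult_le_compat_r; auto. apply Rmult_le_compat_r; auto.
Qed.

Definition gev_coef d r beta a (f : field d) (k : Zd d) : R := sqrt (gev_term d r beta a f k).

Definition gev_sum_norm d r beta a (f : field d) : R := sqrt (tsum (gev_term d r beta a f)).

Lemma gev_norm_scale d r beta a f :
  gev_norm d r beta a f = sqrt ((2 * PI) ^ d) * gev_sum_norm d r beta a f.
Proof.
  apply sqrt_mult_alt. apply pow_le. pose proof PI_RGT_0. lra.
Qed.

Lemma gev_coef_nonneg d r beta a f k : 0 <= gev_coef d r beta a f k.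
Proof. apply sqrt_pos. Qed.

Lemma gev_coef_partial_sums_le d r beta a f : (exists S, has_sum (gev_term d r beta a f) S) ->
  partial_sums_le (fun k => gev_coef d r beta a f k ^ 2) (gev_sum_norm d r beta a f ^ 2).
Proof.
  intros Hs F HF. unfold gev_coef, gev_sum_norm.
  rewrite (lsum_ext _ (gev_term d r beta a f)) by (intros; apply pow2_sqrt, gev_term_nonneg).
  rewrite pow2_sqrt by (apply tsum_nonneg, gev_term_nonneg).
  apply lsum_le_tsum; auto using gev_term_nonneg.
Qed.

Lemma gev_term_0_le_quarter d r beta f k :
  gev_term d r beta 0 f k <= gev_term d r beta (1/4) f k.
Proof.
  unfold gev_term, Apow. destruct (Req_EM_T _ _) as [E|E]; [lra|].
  apply Rmult_le_compat_r; [apply vnorm2_nonneg|]. apply Rmult_le_compat_r; [left; apply exp_pos|].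
  apply Rle_Rpower; [apply knorm2_ge1; auto|lra].
Qed.

Lemma gev_summable_0 d r beta f : gev_finite d r beta (1/4) f ->
  exists S, has_sum (gev_term d r beta 0 f) S.
Proof.
  intros Hf. apply (summable_of_partial_sums_le _ (tsum (gev_term d r beta (1/4) f)));
    [intros; apply gev_term_nonneg|].
  intros F HF. eapply Rle_trans; [apply lsum_le; intros; apply gev_term_0_le_quarter|].
  apply lsum_le_tsum; auto using gev_term_nonneg.
Qed.

Section TrilinearEstimate.
Variables (d : nat) (r beta : R) (u v w : field d).
Hypotheses (hd : d = 2%nat \/ d = 3%nat) (Hr : (INR d + 1) / 2 < r) (Hbeta : 0 < beta)
  (Hu : forall i, (i < d)%nat -> u (Zd_zero d) i = C0)
  (Hv : forall i, (i < d)%nat -> v (Zd_zero d) i = C0)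
  (Su1 : gev_finite d r beta (1/4) u) (Sv1 : gev_finite d r beta (1/4) v)
  (Sw1 : gev_finite d r beta (1/4) w).

Let gev_weight (k : Zd d) : R := Apow d k r * exp (2 * beta * knorm d k).

Let conv_sum (k : Zd d) (J : list (Zd d)) : R :=
  lsum (fun j => vnorm d u j * knorm d (Zd_sub d k j) * vnorm d v (Zd_sub d k j)) J.

Let Hr1 : 1/2 < r.
Proof. pose proof (pos_INR d). lra. Qed.

Lemma gev_weight_nonneg k : 0 <= gev_weight k.
Proof. apply Rmult_le_pos; [apply Apow_nonneg|left; apply exp_pos]. Qed.

Lemma trilinear_weight_le k j :
  gev_weight k * vnorm d w k * (vnorm d u j * knorm d (Zd_sub d k j) * vnorm d v (Zd_sub d k j))
  <= Rpower 2 r *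
     (gev_coef d r beta (1/4) w k * (gev_coef d r beta 0 u j * sqrt (Apow d j (-r)))
        * gev_coef d r beta (1/4) v (Zd_sub d k j)
      + gev_coef d r beta (1/4) w k * gev_coef d r beta (1/4) u j
        * (gev_coef d r beta 0 v (Zd_sub d k j) * sqrt (Apow d (Zd_sub d k j) (-r)))).
Proof.
  set (l := Zd_sub d k j). unfold gev_coef.
  match goal with |- _ <= ?rhs => assert (HR : 0 <= rhs) end.
  { apply Rmult_le_pos; [left; apply Rpower_pos|].
    apply Rplus_le_le_0_compat; repeat apply Rmult_le_pos; apply sqrt_pos. }
  (* [Apow] is 0 at the zero mode, so the mean-zero hypotheses handle j = 0 and k - j = 0. *)
  destruct (Req_EM_T (knorm2 d k) 0) as [Ek|Ek].
  { unfold gev_weight, Apow. destruct (Req_EM_T _ _); [|contradiction]. rewrite !Rmult_0_l. auto. }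
  destruct (Req_EM_T (knorm2 d j) 0) as [Ej|Ej].
  { assert (E : vnorm d u j = 0) by (rewrite (knorm2_eq0 d j Ej); apply vnorm_zero_mode; auto).
    rewrite E, Rmult_0_l, Rmult_0_l, Rmult_0_r. auto. }
  destruct (Req_EM_T (knorm2 d l) 0) as [El|El].
  { assert (E : vnorm d v l = 0) by (rewrite (knorm2_eq0 d l El); apply vnorm_zero_mode; auto).
    rewrite E, !Rmult_0_r. auto. }
  unfold gev_weight. rewrite !sqrt_gev_term, !sqrt_Apow_npow, Apow_knorm by auto.
  assert (Hcancel : forall z, knorm2 d z <> 0 -> forall f,
     Rpower (knorm d z) (r + 2 * 0) * exp (beta * knorm d z) * vnorm d f z * Rpower (knorm d z) (- r)
     = exp (beta * knorm d z) * vnorm d f z).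
  { intros z Hz f. rewrite Rmult_comm, <- !Rmult_assoc, <- Rpower_plus.
    replace (- r + (r + 2 * 0)) with 0 by ring.
    rewrite Rpower_O by (pose proof (knorm_ge1 d z Hz); lra). ring. }
  rewrite !Hcancel by auto. replace (r + 2 * (1/4)) with (r + 1/2) by field.
  apply weight_split_le; auto using vnorm_nonneg, knorm_triangle; try lra.
  - pose proof (knorm_ge1 d k Ek); lra.
  - apply knorm_ge1; auto.
  - apply knorm_ge1; auto.
Qed.

Definition trilinear_bound : R :=
  Rpower 2 r * sqrt lattice_const *
  (gev_sum_norm d r beta 0 u * gev_sum_norm d r beta (1/4) v * gev_sum_norm d r beta (1/4) w
   + gev_sum_norm d r beta 0 v * gev_sum_norm d r beta (1/4) u * gev_sum_norm d r beta (1/4) w).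

Let low_partial_sums_le (f : field d) : gev_finite d r beta (1/4) f ->
  partial_sums_le (fun j => gev_coef d r beta 0 f j * sqrt (Apow d j (-r)))
    (gev_sum_norm d r beta 0 f * sqrt lattice_const).
Proof.
  intros Hf. unfold gev_coef, gev_sum_norm.
  rewrite <- sqrt_mult_alt by (apply tsum_nonneg, gev_term_nonneg).
  apply lsum_sqrt_mul_le; auto using gev_term_nonneg, Apow_nonneg, Apow_npow_partial_sums_le.
  apply partial_sums_le_tsum; auto using gev_term_nonneg, gev_summable_0.
Qed.

Let sqrt_sq_mul (x y : R) : 0 <= x -> 0 <= y -> sqrt (x ^ 2 * y ^ 2) = x * y.
Proof. intros. rewrite sqrt_mult_alt, !sqrt_pow2 by (auto; apply pow2_ge_0). reflexivity. Qed.

Lemma trilinear_lsum_le K J : NoDup K -> NoDup J ->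
  lsum (fun k => gev_weight k * vnorm d w k * conv_sum k J) K <= trilinear_bound.
Proof.
  intros HK HJ.
  set (c1 := gev_coef d r beta (1/4)).
  set (c0 := fun (f : field d) j => gev_coef d r beta 0 f j * sqrt (Apow d j (-r))).
  apply Rle_trans with (Rpower 2 r *
    (lsum (fun k => lsum (fun j => c1 w k * c0 u j * c1 v (Zd_sub d k j)) J) K
     + lsum (fun k => lsum (fun j => c1 w k * c1 u j * c0 v (Zd_sub d k j)) J) K)).
  { rewrite <- lsum_plus, <- lsum_scal. apply lsum_le. intros k _. unfold conv_sum.
    rewrite <- lsum_plus, <- !lsum_scal. apply lsum_le. intros j _.
    apply trilinear_weight_le; auto. }
  unfold trilinear_bound. rewrite Rmult_assoc. apply Rmult_le_compat_l; [left; apply Rpower_pos|].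
  assert (Hn : forall a f, 0 <= gev_sum_norm d r beta a f) by (intros; apply sqrt_pos).
  assert (Hc0 : forall f j, 0 <= c0 f j) by (intros; apply Rmult_le_pos; apply sqrt_pos).
  rewrite Rmult_plus_distr_l. apply Rplus_le_compat.
  - eapply Rle_trans.
    { apply (young_conv_l (Zd_sub d) (Zd_sub_inj_r d) (c1 v) (c0 u) (c1 w)); auto using gev_coef_nonneg.
      - apply gev_coef_partial_sums_le; auto.
      - apply low_partial_sums_le; auto.
      - apply gev_coef_partial_sums_le; auto. }
    rewrite sqrt_sq_mul by auto. right; ring.
  - eapply Rle_trans.
    { apply (young_conv_r (Zd_sub d) (Zd_sub_inj_l d) (Zd_sub_inj_r d) (c1 u) (c0 v) (c1 w));
        auto using gev_coef_nonneg.
      - apply gev_coef_partial_sums_le; auto.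
      - apply low_partial_sums_le; auto.
      - apply gev_coef_partial_sums_le; auto. }
    rewrite sqrt_sq_mul by auto. right; ring.
Qed.

Let mode (k : Zd d) : Defs.C :=
  Csum_range d (fun i => Cmul (Bhat d u v k i) (Cconj (gev_mult d r beta w k i))).

Lemma Cnorm1_mode_le k X : (forall m, (m < d)%nat -> Cnorm1 (tsumC (conv_term d u v k m)) <= X) ->
  Cnorm1 (mode k) <= 4 * INR d ^ 2 * (gev_weight k * vnorm d w k) * X.
Proof.
  intros HX.
  assert (HX0 : 0 <= X).
  { apply Rle_trans with (Cnorm1 (tsumC (conv_term d u v k 0))); [apply Cnorm1_nonneg|].
    apply HX. destruct hd; lia. }
  pose proof (gev_weight_nonneg k). pose proof (vnorm_nonneg d w k). pose proof (pos_INR d).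
  unfold mode. eapply Rle_trans; [apply Cnorm1_Csum|]. rewrite Rsum_range_lsum.
  apply Rle_trans with (lsum (fun _ => 2 * (INR d * X) * (gev_weight k * (2 * vnorm d w k))) (seq 0 d));
    [|rewrite lsum_const, length_seq; right; ring].
  apply lsum_le. intros i Hi. apply in_seq in Hi.
  eapply Rle_trans; [apply Cnorm1_mul|]. rewrite Cnorm1_conj.
  unfold gev_mult. rewrite Cnorm1_RtoC_mul, (Rabs_right (_ * _)) by (apply Rle_ge, gev_weight_nonneg).
  rewrite Bhat_conv_term.
  apply Rmult_le_compat; try apply Cnorm1_nonneg.
  - apply Rmult_le_pos; [apply gev_weight_nonneg|apply Cnorm1_nonneg].
  - eapply Rle_trans; [apply Cnorm1_leray_le; lia|]. apply Rmult_le_compat_l; [lra|].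
    rewrite Rsum_range_lsum.
    apply Rle_trans with (lsum (fun _ => X) (seq 0 d)); [|rewrite lsum_const, length_seq; lra].
    apply lsum_le. intros m Hm. apply in_seq in Hm. apply HX. lia.
  - apply Rmult_le_compat_l; [apply gev_weight_nonneg|]. apply Cnorm1_comp_le. lia.
Qed.

Lemma lsum_Cnorm1_mode_le K : NoDup K ->
  lsum (fun k => Cnorm1 (mode k)) K <= 16 * INR d ^ 3 * trilinear_bound.
Proof.
  intros HK. apply Rle_plus_epsilon. intros eps He.
  set (D := INR d). assert (HD : 0 <= D) by apply pos_INR.
  set (Q := lsum (fun k => gev_weight k * vnorm d w k) K).
  assert (HQ : 0 <= Q) by (apply lsum_nonneg; intros; apply Rmult_le_pos; auto using gev_weight_nonneg, vnorm_nonneg).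
  set (eps' := eps / (8 * D ^ 2 * Q + 1)).
  assert (Hden : 0 < 8 * D ^ 2 * Q + 1) by nra.
  assert (He' : 0 < eps') by (apply Rdiv_lt_0_compat; lra).
  assert (Hee : 8 * D ^ 2 * Q * eps' <= eps).
  { unfold eps'. apply (Rmult_le_reg_r (8 * D ^ 2 * Q + 1)); auto.
    replace (8 * D ^ 2 * Q * (eps / (8 * D ^ 2 * Q + 1)) * (8 * D ^ 2 * Q + 1))
      with (eps * (8 * D ^ 2 * Q)) by (field; lra). nra. }
  destruct (Cnorm1_tsumC_approx_uniform (fun p => conv_term d u v (fst p) (snd p))
              (lprod K (seq 0 d)) eps' He') as [J0 HJ0].
  destruct (NoDup_cover J0) as [J [HJ Hi]].
  apply Rle_trans with (lsum (fun k => 16 * D ^ 3 * (gev_weight k * vnorm d w k * conv_sum k J)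
                                     + 8 * D ^ 2 * eps' * (gev_weight k * vnorm d w k)) K).
  - apply lsum_le. intros k Hk.
    eapply Rle_trans.
    { apply (Cnorm1_mode_le k (4 * D * conv_sum k J + 2 * eps')). intros m Hm.
      eapply Rle_trans; [apply (HJ0 J HJ Hi (k, m)); apply in_lprod; auto; apply in_seq; lia|].
      apply Rplus_le_compat_r. unfold conv_sum. rewrite <- lsum_scal. apply lsum_le; intros j _.
      apply Cnorm1_conv_term_le; auto. }
    right. fold D. ring.
  - rewrite lsum_plus, !lsum_scal. fold Q.
    pose proof (trilinear_lsum_le K J HK HJ).
    assert (0 <= 16 * D ^ 3) by (apply Rmult_le_pos; [lra|apply pow_le; auto]).
    assert (16 * D ^ 3 * lsum (fun k => gev_weight k * vnorm d w k * conv_sum k J) K <= 16 * D ^ 3 * trilinear_bound)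
      by (apply Rmult_le_compat_l; auto).
    nra.
Qed.

Lemma Cmod_inner_le :
  Cmod (inner d (Bhat d u v) (gev_mult d r beta w))
  <= (2 * PI) ^ d * (2 * (16 * INR d ^ 3 * trilinear_bound)).
Proof.
  pose proof PI_RGT_0.
  eapply Rle_trans; [apply Cmod_le_Cnorm1|]. unfold inner. rewrite Cnorm1_RtoC_mul.
  rewrite Rabs_right by (apply Rle_ge, pow_le; lra).
  apply Rmult_le_compat_l; [apply pow_le; lra|].
  apply Cnorm1_tsumC_le. intros K HK. apply lsum_Cnorm1_mode_le; auto.
Qed.

End TrilinearEstimate.

Lemma C_W_lower_bound d r : (d <= 3)%nat -> (INR d + 1) / 2 < r -> / (4 * PI) <= C_W d r.
Proof.
  intros Hd Hr. pose proof PI_RGT_0. unfold C_W.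
  assert (h2 : 2 ^ (d - 1) <= 2 ^ 2) by (apply Rle_pow; [lra|lia]).
  assert (h1 : 1 <= 2 ^ (d - 1)) by (apply pow_R1_Rle; lra).
  assert (Hq : 1 <= (2 * r - INR d) / (2 * r - 1 - INR d)).
  { apply (Rmult_le_reg_r (2 * r - 1 - INR d)); [lra|]. field_simplify; lra. }
  assert (/ (4 * PI) <= / (PI * 2 ^ (d - 1))) by (apply Rinv_le_contravar; simpl in h2; nra).
  assert (0 < / (PI * 2 ^ (d - 1))) by (apply Rinv_0_lt_compat; nra).
  nra.
Qed.

Lemma lattice_const_sqrt_le : sqrt lattice_const <= 54.
Proof.
  rewrite <- (sqrt_pow2 54) by lra. apply sqrt_le_1_alt. unfold lattice_const. lra.
Qed.

(* [s] stands for [sqrt ((2 pi)^d)], the factor relating [gev_norm] and [gev_sum_norm]. *)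
Lemma trilinear_constant_le d r (E X s : R) : (d <= 3)%nat -> (INR d + 1) / 2 < r ->
  0 < E -> 0 <= X -> 1 <= s ->
  s ^ 2 * (2 * (16 * INR d ^ 3 * (E * sqrt lattice_const * X)))
  <= 32 * 27 * 54 * (4 * PI) * E * C_W d r * (s ^ 3 * X).
Proof.
  intros Hd Hr HE HX Hs. pose proof PI_RGT_0.
  assert (HD : 0 <= INR d ^ 3 <= 27).
  { split; [apply pow_le, pos_INR|]. replace 27 with (INR 3 ^ 3) by (simpl; ring).
    apply pow_incr. split; [apply pos_INR|apply le_INR; auto]. }
  pose proof lattice_const_sqrt_le. pose proof (sqrt_pos lattice_const).
  assert (HC : 1 <= 4 * PI * C_W d r).
  { pose proof (C_W_lower_bound d r Hd Hr).
    replace 1 with (4 * PI * / (4 * PI)) by (field; lra). apply Rmult_le_compat_l; lra. }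
  assert (Hs2 : s ^ 2 <= s ^ 3) by (simpl; nra).
  assert (HEX : 0 <= E * X) by nra.
  assert (INR d ^ 3 * sqrt lattice_const <= 27 * 54) by (apply Rmult_le_compat; lra).
  assert (0 <= INR d ^ 3 * sqrt lattice_const) by nra.
  assert (s ^ 2 * (INR d ^ 3 * sqrt lattice_const) <= s ^ 3 * (27 * 54))
    by (apply Rmult_le_compat; try lra; apply pow_le; lra).
  replace (s ^ 2 * (2 * (16 * INR d ^ 3 * (E * sqrt lattice_const * X))))
    with (32 * (E * X) * (s ^ 2 * (INR d ^ 3 * sqrt lattice_const))) by ring.
  replace (32 * 27 * 54 * (4 * PI) * E * C_W d r * (s ^ 3 * X))
    with (32 * (E * X) * (s ^ 3 * (27 * 54)) * (4 * PI * C_W d r)) by ring.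
  assert (0 <= 32 * (E * X) * (s ^ 3 * (27 * 54))) by (repeat apply Rmult_le_pos; try lra; apply pow_le; lra).
  nra.
Qed.

Theorem mainTheorem4 (d : nat) (hd : d = 2%nat \/ d = 3%nat) :
  exists Cst : R, 0 < Cst /\
    forall (r beta : R) (u v w : field d),
      (INR d + 1) / 2 < r -> 0 < beta ->
      in_HC d u -> in_HC d v -> in_HC d w ->
      gev_finite d r beta (1/4) u -> gev_finite d r beta (1/4) v ->
      gev_finite d r beta (1/4) w ->
      Cmod (inner d (Bhat d u v) (gev_mult d r beta w))
      <= Cst * Rpower 2 r * C_W d r *
         (gev_norm d r beta 0 v * gev_norm d r beta (1/4) u * gev_norm d r beta (1/4) w
          + gev_norm d r beta 0 u * gev_norm d r beta (1/4) v * gev_norm d r beta (1/4) w).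
Proof.
  pose proof PI_RGT_0. pose proof PI2_1.
  exists (32 * 27 * 54 * (4 * PI)). split; [lra|].
  intros r beta u v w Hr Hb [_ [Hu _]] [_ [Hv _]] _ Fu Fv Fw.
  eapply Rle_trans; [apply (Cmod_inner_le d r beta u v w); auto|].
  set (s := sqrt ((2 * PI) ^ d)).
  assert (Hs2 : (2 * PI) ^ d = s ^ 2) by (unfold s; rewrite pow2_sqrt; auto; apply pow_le; lra).
  assert (Hs : 1 <= s) by (unfold s; rewrite <- sqrt_1; apply sqrt_le_1_alt, pow_R1_Rle; lra).
  rewrite Hs2, !gev_norm_scale. fold s. unfold trilinear_bound.
  set (N := gev_sum_norm d r beta).
  assert (HN : forall a f, 0 <= N a f) by (intros; apply sqrt_pos).
  replace (_ * (s * N 0 v * (s * N (1/4) u) * (s * N (1/4) w) + s * N 0 u * (s * N (1/4) v) * (s * N (1/4) w)))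
    with (32 * 27 * 54 * (4 * PI) * Rpower 2 r * C_W d r *
          (s ^ 3 * (N 0 u * N (1/4) v * N (1/4) w + N 0 v * N (1/4) u * N (1/4) w))) by ring.
  apply trilinear_constant_le; auto using Rpower_pos.
  - destruct hd; subst; lia.
  - apply Rplus_le_le_0_compat; repeat apply Rmult_le_pos; auto.
Qed.
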